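(* Let $G=(V,E,w)$ be an undirected graph with positive real edge weights, $s\in V$, let $T$ be a shortest-path tree of $G$ rooted at $s$ and $w'$ as in the context. Let $F\subseteq E$, let $t\in V$ be reachable from $s$ in $G-F$, let $\pi$ be a shortest path from $s$ to $t$ in $G-F$, and let $N$ be the set of new edges of $\pi$. Then for every $e\in N$, $w'(e)\le 2\,d_{G-F}(t)$.
   Context: For a subgraph $X$ of $G$, $d_X(u)$ denotes the distance from $s$ to $u$ in $X$ with respect to $w$. Define $w'(u,v)=0$ if $(u,v)\in E(T)$ and $w'(u,v)=d_T(u)+w(u,v)+d_T(v)$ otherwise. $G-F$ and $T-F$ denote $G$ and $T$ with the edges of $F$ removed. An edge is called new if its endpoints lie in different connected components of the forest $T-F$. *)

From HB Require Import structures.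
From mathcomp Require Import all_boot all_order all_algebra.
From mathcomp Require Import boolp classical_sets reals constructive_ereal ereal.

Set Implicit Arguments. Unset Strict Implicit. Unset Printing Implicit Defensive.
Import Order.TTheory GRing.Theory Num.Theory.
Local Open Scope ring_scope.

(* An undirected simple graph on the vertex set V is given by its edge set
   X : {set {set V}} (each edge is a 2-element set {u, v}); edge weights are a
   function w : {set V} -> R.  Subgraphs (T, G - F, T - F) are edge subsets
   on the same vertex set. *)

Section Graphs.
Variables (R : realType) (V : finType).

Definition edge (x y : V) : {set V} := finset.setU (finset.set1 x) (finset.set1 y).

Definition adj (X : {set {set V}}) : rel V := fun x y => edge x y \in X.

(* p is a walk in X from a to b (vertex sequence a :: p) *)
Definition walk (X : {set {set V}}) (a : V) (p : seq V) (b : V) : bool :=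
  path (adj X) a p && (last a p == b).

Definition walk_len (w : {set V} -> R) (a : V) (p : seq V) : R :=
  \sum_(x <- pairmap (fun x y => w (edge x y)) a p) x.

Definition connected (X : {set {set V}}) (a b : V) : Prop :=
  exists p, walk X a p b.

(* d_X(u): distance from s to u in X w.r.t. w (+oo if unreachable) *)
Definition dist (X : {set {set V}}) (w : {set V} -> R) (s u : V) : \bar R :=
  ereal_inf [set (walk_len w s p)%:E | p in [set p | walk X s p u]]%classic.

Definition acyclic (T : {set {set V}}) : Prop :=
  forall (a b : V), a != b -> edge a b \in T ->
    ~ connected (T :\ edge a b) a b.

Definition is_spt (E : {set {set V}}) (w : {set V} -> R) (s : V)
    (T : {set {set V}}) : Prop :=
  [/\ T \subset E, acyclic T,
      (forall e, e \in T -> forall v, v \in e -> connected T s v)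
    & (forall v, dist T w s v = dist E w s v)].

Definition wprime (T : {set {set V}}) (w : {set V} -> R) (s u v : V) : \bar R :=
  if edge u v \in T then 0%E
  else (dist T w s u + (w (edge u v))%:E + dist T w s v)%E.

Definition new_edge (T F : {set {set V}}) (u v : V) : Prop :=
  ~ connected (T :\: F) u v.

End Graphs.

(** Cut the shortest path [pi] at the edge [uv]: its prefix up to [u] is a walk
    of [G] from [s], so [d_T(u) = d_G(u)] is at most the prefix length, and
    likewise [d_T(v)] is at most the prefix length plus [w(uv)].  Hence
    [w'(uv) = d_T(u) + w(uv) + d_T(v)] is at most twice the length of the prefix
    ending with [uv], which is at most twice [|pi| = d_{G-F}(t)].  The bound holds
    for every edge of [pi]. *)
From HB Require Import structures.
From mathcomp Require Import all_boot all_order all_algebra.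
From mathcomp Require Import reals constructive_ereal.
From mathcomp Require Import lra.
From mathcomp Require ereal.
Import Order.TTheory GRing.Theory Num.Theory.
Local Open Scope ring_scope.

Lemma mem_zip_behead_split {T : eqType} {a u v : T} {p : seq T} :
  (u, v) \in zip (a :: p) p ->
  exists p1 p2, p = p1 ++ v :: p2 /\ last a p1 = u.
Proof.
elim: p a => [|x p IHp] a //=; rewrite in_cons => /orP [/eqP [-> ->]|uv_p].
  by exists [::], p.
have [p1 [p2 [-> last_p1]]] := IHp x uv_p.
by exists (x :: p1), p2.
Qed.

Section WalkLength.
Variables (R : realType) (V : finType) (w : {set V} -> R).

Lemma walk_len_cat a p1 p2 :
  walk_len w a (p1 ++ p2) = walk_len w a p1 + walk_len w (last a p1) p2.
Proof. by rewrite /walk_len pairmap_cat big_cat. Qed.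

Lemma walk_len_cons a x p :
  walk_len w a (x :: p) = w (edge a x) + walk_len w x p.
Proof. by rewrite /walk_len /= big_cons. Qed.

Lemma walk_len_rcons a p x :
  walk_len w a (rcons p x) = walk_len w a p + w (edge (last a p) x).
Proof. by rewrite -cats1 walk_len_cat walk_len_cons /walk_len big_nil addr0. Qed.

Lemma walk_len_ge0 (X : {set {set V}}) a p :
  {in X, forall e, 0 <= w e} -> path (adj X) a p -> 0 <= walk_len w a p.
Proof.
move=> w_ge0; elim: p a => [|x p IHp] a /=; first by rewrite /walk_len big_nil.
by case/andP=> ax_X p_X; rewrite walk_len_cons addr_ge0 ?IHp ?w_ge0.
Qed.

Lemma dist_le_walk_len (X Y : {set {set V}}) s p u :
  X \subset Y -> walk X s p u -> (dist Y w s u <= (walk_len w s p)%:E)%E.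
Proof.
move=> sXY /andP [p_X last_p]; apply: ereal.ge_ereal_inf.
exists (walk_len w s p)%:E => //; exists p => //=; rewrite /walk last_p andbT.
by apply: sub_path p_X => x y; apply: (subsetP sXY).
Qed.

End WalkLength.

Arguments walk_len_ge0 {R V w X a p}.
Arguments dist_le_walk_len {R V} w {X Y s p u}.

Theorem lemma4 (R : realType) (V : finType) (E : {set {set V}})
    (w : {set V} -> R) (s : V) (T F : {set {set V}}) (t : V) (pi : seq V) :
  (forall e, e \in E -> #|e| = 2%N) ->
  (forall e, e \in E -> 0 < w e) ->
  is_spt E w s T ->
  F \subset E ->
  connected (E :\: F) s t ->
  walk (E :\: F) s pi t ->
  (walk_len w s pi)%:E = dist (E :\: F) w s t ->
  forall u v, (u, v) \in zip (s :: pi) pi -> new_edge T F u v ->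
  (wprime T w s u v <= 2%:E * dist (E :\: F) w s t)%E.
Proof.
move=> _ w_gt0 [_ _ _ dT_dE] _ _ pi_walk pi_shortest u v uv_pi _.
rewrite -pi_shortest; have sGFE : E :\: F \subset E := subsetDl E F.
have w_ge0 : {in E :\: F, forall e, 0 <= w e}.
  by move=> e /(subsetP sGFE) /w_gt0 /ltW.
have [p1 [p2 [pi_eq last_p1]]] := mem_zip_behead_split uv_pi.
move: pi_walk; rewrite /walk {1}pi_eq cat_path /= last_p1.
case/andP=> /andP [p1_path /andP [uv_GF p2_path]] _.
have len_pi : walk_len w s pi = walk_len w s p1 + w (edge u v) + walk_len w v p2.
  by rewrite pi_eq walk_len_cat last_p1 walk_len_cons addrA.
have len_p1_ge0 := walk_len_ge0 w_ge0 p1_path.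
have len_p2_ge0 := walk_len_ge0 w_ge0 p2_path.
have w_uv_ge0 := w_ge0 _ uv_GF.
rewrite /wprime; case: ifP => _; first by rewrite -EFinM lee_fin len_pi; lra.
have d_u : (dist E w s u <= (walk_len w s p1)%:E)%E.
  by apply: (dist_le_walk_len w sGFE); rewrite /walk p1_path last_p1 eqxx.
have d_v : (dist E w s v <= (walk_len w s p1 + w (edge u v))%:E)%E.
  rewrite -last_p1 -walk_len_rcons; apply: (dist_le_walk_len w sGFE).
  by rewrite /walk rcons_path p1_path last_rcons last_p1 uv_GF eqxx.
rewrite !dT_dE; apply: (le_trans (leeD (leeD d_u (lexx _)) d_v)).
by rewrite -!EFinD -EFinM lee_fin len_pi; lra.
Qed.
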